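(* Let $d\ge 1$, $n\in\mathbb{N}$, and let $S$ be simple symmetric random walk on $\mathbb{Z}^d$ started at $0$, with range $R(n)=\{S(0),\ldots,S(n)\}$. For every finite $A\subset\mathbb{Z}^d$, $$p_n(A):=\Pr[R(n)=A]\le\Big(1-\frac{1}{2d}\Big)^{|\partial A|-1}.$$
   Context: Two vertices $z,w\in\mathbb{Z}^d$ are adjacent, $z\sim w$, if their graph distance in $\mathbb{Z}^d$ is $1$; $z\sim B$ means the graph distance from $z$ to the set $B$ is $1$. The inner boundary of $A\subset\mathbb{Z}^d$ is $\partial A=\{z\in A : z\sim \mathbb{Z}^d\setminus A\}$. *)

From HB Require Import structures.
From mathcomp Require Import all_boot all_order all_algebra.
Set Implicit Arguments. Unset Strict Implicit. Unset Printing Implicit Defensive.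
Import Order.TTheory GRing.Theory Num.Theory.
Local Open Scope ring_scope.

Definition pt (d : nat) := {ffun 'I_d -> int}.

(* A step of the simple random walk: a coordinate and a sign (2d choices). *)
Definition step (d : nat) := ('I_d * bool)%type.

Definition stepv d (s : step d) : pt d :=
  [ffun i => if i == s.1 then (if s.2 then 1 else -1) else 0].

Definition pos d n (w : n.-tuple (step d)) (k : nat) : pt d :=
  [ffun i => \sum_(j < n | (j < k)%N) stepv (tnth w j) i].

Definition range d n (w : n.-tuple (step d)) : seq (pt d) :=
  [seq pos w k | k <- iota 0 n.+1].

Definition same_set (T : eqType) (r A : seq T) : bool :=
  all (fun z => z \in A) r && all (fun z => z \in r) A.

Definition adj d (z w : pt d) : Prop := \sum_(i < d) `|z i - w i| = 1.

Definition in_inner_boundary d (A : seq (pt d)) (z : pt d) : Prop :=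
  z \in A /\ exists w : pt d, adj z w /\ w \notin A.

(* p_n(A) = P[R(n) = A] for simple symmetric random walk: each of the
   (2d)^n step sequences has probability (2d)^-n. *)
Definition pn d n (A : seq (pt d)) : rat :=
  (#|[set w : n.-tuple (step d) | same_set (range w) A]|%:R / ((2 * d) ^ n)%N%:R).

From HB Require Import structures.
From mathcomp Require Import all_boot all_order all_algebra ring.
Import Order.TTheory GRing.Theory Num.Theory.
Set Implicit Arguments. Unset Strict Implicit. Unset Printing Implicit Defensive.

(* Write m = 2d and q = 1 - 1/m.  Every point z of the inner
   boundary of A has a neighbour z + e outside A, where e is one of the m unit
   steps.  If the range of the walk equals A, the walk stays in A and visits
   every boundary point; at each visit to a boundary point that is not the
   final position, the walk must avoid the step e, which happens with
   probability q, and these visits happen at distinct times.  Hence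
   P[R(n) = A] <= q^(|dA| - 1).

   Formally we count, for a start point x and a duplicate-free list P of such
   "exposed" points, the walks of length n from x that stay in A and visit all
   of P, and prove by induction on n (peeling off the first step) the bound
   #walks * m^|P| * (m-1) <= m^(n+1) * (m-1)^|P|.  Specialised to x = 0 and
   P the boundary of A, this is the theorem after dividing by m^n. *)

Lemma card_tuple_cons (T : finType) n (Q : seq T -> bool) :
  #|[set w : n.+1.-tuple T | Q w]| =
  \sum_(a : T) #|[set t : n.-tuple T | Q (a :: t)]|.
Proof.
rewrite -sum1_card; symmetry; under eq_bigr => a _ do rewrite -sum1_card.
rewrite pair_big_dep /= (reindex (fun p : T * n.-tuple T => [tuple of p.1 :: p.2])).
  by apply: eq_bigl => -[a t]; rewrite !inE.
exists (fun w : n.+1.-tuple T => (thead w, [tuple of behead w])).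
  by move=> [a t] _ /=; rewrite theadE; congr pair; apply: val_inj.
by move=> w _ /=; rewrite -tuple_eta.
Qed.

Section Walks.
Local Open Scope ring_scope.
Variable d : nat.

Definition padd (x y : pt d) : pt d := [ffun i => x i + y i].

Fixpoint trace (x : pt d) (s : seq (step d)) : seq (pt d) :=
  x :: if s is a :: s' then trace (padd x (stepv a)) s' else [::].

Lemma pos0 n (w : n.-tuple (step d)) : pos w 0 = [ffun=> 0].
Proof. by apply/ffunP => i; rewrite !ffunE big_pred0. Qed.

Lemma posS n a (t : n.-tuple (step d)) k :
  pos [tuple of a :: t] k.+1 = padd (stepv a) (pos t k).
Proof.
apply/ffunP => i; rewrite [LHS]ffunE [in RHS]ffunE.
rewrite (big_mkcond (fun j : 'I_n.+1 => (j < k.+1)%N)) big_ord_recl /= tnth0.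
congr (_ + _); rewrite ffunE (big_mkcond (fun j : 'I_n => (j < k)%N)).
by apply: eq_bigr => j _; rewrite tnthS.
Qed.

Lemma translated_range n (w : n.-tuple (step d)) (x : pt d) :
  [seq padd x (pos w k) | k <- iota 0 n.+1] = trace x w.
Proof.
have padd0 y : padd y [ffun=> 0] = y by apply/ffunP => i; rewrite !ffunE addr0.
elim: n w x => [|n IH] w x; first by rewrite tuple0 /= pos0 padd0.
case/tupleP: w => a t /=; rewrite pos0 padd0 -IH; congr (_ :: _).
rewrite -[_ :: _]/([seq padd x (pos [tuple of a :: t] k) | k <- iota 1 n.+1]).
have -> : iota 1 n.+1 = map (addn 1) (iota 0 n.+1) by rewrite -iotaDl.
rewrite -map_comp; apply: eq_map => k /=.
by rewrite posS; apply/ffunP => i; rewrite !ffunE addrA.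
Qed.

Lemma range_trace n (w : n.-tuple (step d)) : range w = trace [ffun=> 0] w.
Proof.
rewrite -translated_range; apply: eq_map => k.
by apply/ffunP => i; rewrite !ffunE add0r.
Qed.

Lemma adj_step (z w : pt d) : adj z w -> exists a, w = padd z (stepv a).
Proof.
rewrite /adj => h.
have [i zwi] : exists i, z i != w i.
  case: (pickP (fun i => z i != w i)) => [i|same]; first by exists i.
  move: h; rewrite big1 // => j _.
  by move/negbFE/eqP: (same j) => ->; rewrite subrr normr0.
rewrite (bigD1 i) //= in h.
have zwi1 : (1 <= `|z i - w i|) by rewrite -gtz0_ge1 normr_gt0 subr_eq0.
have rest0 : \sum_(j | j != i) `|z j - w j| = 0.
  apply/le_anti; rewrite sumr_ge0 ?andbT //.
  by rewrite -(lerD2l `|z i - w i|) h addr0.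
have wj j : j != i -> w j = z j.
  move=> ji; have /eqP := psumr_eq0P (fun j _ => normr_ge0 (z j - w j)) rest0 ji.
  by rewrite normr_eq0 subr_eq0 => /eqP.
have /eqP : `|w i - z i| = 1 by rewrite distrC -h rest0 addr0.
rewrite eqr_norml ler01 andbT => wi.
exists (i, w i - z i == 1); apply/ffunP => j; rewrite !ffunE /=.
have [->|ji] := eqVneq j i; last by rewrite wj // addr0.
by case: (orP wi) => /eqP wiE; rewrite wiE /= -wiE addrC subrK.
Qed.

End Walks.

Section ConfinedWalks.
Variables (d : nat) (A : seq (pt d)).
Local Notation m := (2 * d)%N.

Definition exposed (z : pt d) : Prop := exists a, padd z (stepv a) \notin A.

Definition confined_visit (x : pt d) (P : seq (pt d)) (s : seq (step d)) : bool :=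
  all (fun z => z \in A) (trace x s) && all (fun z => z \in trace x s) P.

Definition walks n x P : nat := #|[set t : n.-tuple (step d) | confined_visit x P t]|.

Lemma card_step : #|{: step d}| = m.
Proof. by rewrite card_prod card_ord card_bool mulnC. Qed.

Lemma confined_visit_cons x P a s : uniq P ->
  confined_visit x P (a :: s) -> confined_visit (padd x (stepv a)) (rem x P) s.
Proof.
move=> uP /andP [/= /andP [_ inA] /allP visP]; rewrite /confined_visit inA /=.
apply/allP => z; rewrite mem_rem_uniq // => /andP [zx /visP].
by rewrite inE (negbTE zx).
Qed.

Lemma walks_outside n y P : y \notin A -> walks n y P = 0%N.
Proof.
move=> yA; apply/eqP; rewrite cards_eq0; apply/eqP/setP => t.
by rewrite !inE /confined_visit; case: (tval t) => [|? ?] /=; rewrite (negbTE yA).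
Qed.

Lemma walks_step n x P : uniq P ->
  (walks n.+1 x P <= \sum_(a : step d) walks n (padd x (stepv a)) (rem x P))%N.
Proof.
move=> uP; rewrite /walks card_tuple_cons; apply: leq_sum => a _.
apply/subset_leq_card/subsetP => t; rewrite !inE.
exact: confined_visit_cons.
Qed.

(* Zero-length walks: the walk is just x, so P is empty or [:: x]. *)
Lemma walks0_bound x P : uniq P ->
  (walks 0 x P * (m ^ size P * m.-1) <= m * m.-1 ^ size P)%N.
Proof.
move=> uP; have [->|] := eqVneq (walks 0 x P) 0%N; first by [].
rewrite -lt0n => /card_gt0P [t]; rewrite inE => /andP [_ /allP visP].
have t0 : tval t = [::] by apply: size0nil; rewrite size_tuple.
have cardW : (walks 0 x P <= 1)%N.
  by apply: leq_trans (max_card _) _; rewrite card_tuple.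
have : (size P <= 1)%N.
  by apply: (@uniq_leq_size _ _ [:: x]) => // z /visP; rewrite t0.
case: (size P) => [|[|//]] _; rewrite ?expn0 ?expn1 ?mul1n ?muln1.
  by apply: leq_trans (leq_pred m); rewrite -[X in (_ <= X)%N]mul1n leq_mul2r cardW orbT.
by rewrite -[X in (_ <= X)%N]mul1n leq_mul2r cardW orbT.
Qed.

(* Each first visit to an exposed point
   forbids (at least) one of the m possible next steps. *)
Lemma walks_bound n x P : uniq P -> {in P, forall z, exposed z} ->
  (walks n x P * (m ^ size P * m.-1) <= m ^ n.+1 * m.-1 ^ size P)%N.
Proof.
elim: n x P => [|n IH] x P uP expP; first by rewrite expn1; exact: walks0_bound.
have IHrem a : (walks n (padd x (stepv a)) (rem x P) * (m ^ size (rem x P) * m.-1)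
                <= m ^ n.+1 * m.-1 ^ size (rem x P))%N.
  by apply: IH; [exact: rem_uniq | move=> z /mem_rem; exact: expP].
apply: leq_trans (leq_mul (walks_step n x uP) (leqnn _)) _; rewrite big_distrl /=.
have [xP|xP] := boolP (x \in P); last first.
  (* x is not a target: every first step is allowed. *)
  rewrite rem_id // in IHrem *.
  apply: (@leq_trans (\sum_(a : step d) m ^ n.+1 * m.-1 ^ size P)).
    by apply: leq_sum => a _; apply: IHrem.
  by rewrite sum_nat_const card_step [m ^ n.+2]expnS mulnA.
(* x is a target: its exit step a0 kills the walk, the other m-1 steps remain,
   and x no longer needs to be visited. *)
have [a0 exit0] := expP x xP.
have sizeP : size P = (size (rem x P)).+1.
  by rewrite size_rem // prednK // -has_predT; apply/hasP; exists x.
rewrite (bigD1 a0) //= walks_outside // mul0n add0n sizeP.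
apply: (@leq_trans (\sum_(a | a != a0) m * (m ^ n.+1 * m.-1 ^ size (rem x P)))).
  apply: leq_sum => a _; rewrite expnS -mulnA mulnCA leq_mul2l IHrem orbT //.
rewrite sum_nat_const cardC1 card_step; apply: eq_leq; rewrite !expnS; ring.
Qed.

Lemma range_walks n P : {subset P <= A} ->
  (#|[set w : n.-tuple (step d) | same_set (range w) A]| <= walks n [ffun=> 0%R] P)%N.
Proof.
move=> PA; apply/subset_leq_card/subsetP => w; rewrite !inE range_trace.
case/andP => inA /allP visA; rewrite /confined_visit inA /=.
by apply/allP => z /PA; apply: visA.
Qed.

End ConfinedWalks.

Local Open Scope ring_scope.

Lemma ratio_bound (m N n k : nat) : (0 < m.-1)%N ->
  (N * (m ^ k * m.-1) <= m ^ n.+1 * m.-1 ^ k)%N ->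
  N%:R / (m ^ n)%N%:R <= (1 - (m%:R)^-1 : rat) ^ (Posz k - 1).
Proof.
move=> m1_gt0 cross.
have m_gt0 : (0 < m)%N by apply: leq_trans m1_gt0 (leq_pred m).
have m1E : (m.-1%:R : rat) = m%:R - 1 by rewrite -{2}(prednK m_gt0) -natr1 addrK.
have mR0 : (m%:R : rat) != 0 by rewrite pnatr_eq0 -lt0n.
have m1R0 : (m.-1%:R : rat) != 0 by rewrite pnatr_eq0 -lt0n.
have -> : (1 - (m%:R)^-1 : rat) = m.-1%:R / m%:R.
  by rewrite m1E mulrBl divff // mul1r.
rewrite expfzDr ?mulf_neq0 ?invr_eq0 // exprN1 -exprnP expr_div_n.
rewrite ler_pdivrMr ?ltr0n ?expn_gt0 ?m_gt0 //.
have c_gt0 : (0 : rat) < (m ^ k * m.-1)%N%:R by rewrite ltr0n muln_gt0 expn_gt0 m_gt0.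
rewrite -(ler_pM2r c_gt0); move: cross; rewrite -(ler_nat rat) !natrM !natrX.
move=> /le_trans; apply; rewrite le_eqVlt; apply/orP; left; apply/eqP.
have mk0 : (m%:R : rat) ^+ k != 0 by rewrite expf_neq0.
rewrite exprS; move: (m%:R ^+ k) (m%:R ^+ n) (m.-1%:R ^+ k) mk0 => a b c a0.
by field; rewrite a0 mR0 m1R0.
Qed.

Theorem mainTheorem2 (d n : nat) (hd : (1 <= d)%N) (A : seq (pt d))
  (B : seq (pt d)) (hB : uniq B)
  (hBA : forall z, z \in B <-> in_inner_boundary A z) :
  pn n A <= (1 - ((2 * d)%N%:R)^-1 : rat) ^ (Posz (size B) - 1).
Proof.
have BA : {subset B <= A} by move=> z /hBA [].
have B_exposed : {in B, forall z, exposed A z}.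
  move=> z /hBA [_ [w [zw wA]]]; have [a wE] := adj_step zw.
  by exists a; rewrite -wE.
apply: ratio_bound; first by rewrite -ltnS prednK ?muln_gt0 // leq_pmulr.
apply: leq_trans (walks_bound n [ffun=> 0%R] hB B_exposed).
by rewrite leq_mul2r range_walks ?orbT.
Qed.
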